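(* Suppose Assumption 1 holds. Let $(\boldsymbol\lambda^*,\boldsymbol\gamma^* )\in\mathbb R^K\times\mathbb R^K$ be a minimizer of $$(\boldsymbol\lambda,\boldsymbol\gamma)\mapsto \langle\boldsymbol\lambda,\boldsymbol\alpha\rangle+\sum_{s=1}^K\mathbb E\big[(G(X,s,\boldsymbol\lambda,\boldsymbol\gamma))_+\,\big|\,S=s\big].$$ Set $c_{\boldsymbol\gamma^*,s}=\frac12\big(\frac{\bar\alpha\gamma^*_s}{\alpha_s p_s}-\langle\mathbf 1,\boldsymbol\gamma^*\rangle\big)$ and define, for $(x,s)\in\mathbb R^d\times[K]$, $$g^*(x,s)=\begin{cases} r & \text{if } G(x,s,\boldsymbol\lambda^*,\boldsymbol\gamma^* )\le 0,\\ \mathbb 1\big(\eta(x,s)\ge \tfrac12+c_{\boldsymbol\gamma^*,s}\big) & \text{otherwise.}\end{cases}$$ Then $g^*$ is an optimal classifier for problem (DPWA): it satisfies the constraints of (DPWA) and minimizes $\mathcal R$ among all classifiers with abstention satisfying them.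
   Context: Let $(X,S,Y)$ be a random triple with law $\mathbb P$ on $\mathbb R^d\times[K]\times\{0,1\}$, $[K]=\{1,\dots,K\}$. Write $p_s=\mathbb P(S=s)>0$ and $\eta(x,s)=\mathbb E[Y\mid X=x,S=s]$. A classifier with abstention is a measurable map $g:\mathbb R^d\times[K]\to\{0,1,r\}$, where $r$ means ''reject''. Define $\mathcal R(g)=\mathbb P(Y\neq g(X,S)\mid g(X,S)\neq r)$, $\mathrm{NA}_s(g)=\mathbb P(g(X,S)\neq r\mid S=s)$, $\mathrm{PT}_s(g)=\mathbb P(g(X,S)=1\mid S=s,\,g(X,S)\neq r)$, $\mathrm{PT}(g)=\mathbb P(g(X,S)=1\mid g(X,S)\neq r)$. Fix $\boldsymbol\alpha=(\alpha_1,\dots,\alpha_K)\in(0,1]^K$ and set $\bar\alpha=\sum_s p_s\alpha_s$. Problem (DPWA): minimize $\mathcal R(g)$ over classifiers with abstention subject to $\mathrm{NA}_s(g)=\alpha_s$ and $\mathrm{PT}_s(g)=\mathrm{PT}(g)$ for all $s\in[K]$. $\mathbf 1\in\mathbb R^K$ is the all-ones vector, $e_s$ the $s$-th standard basis vector, $(a)_+=\max(a,0)$. Assumption 1: for every $s\in[K]$, the conditional law of $\eta(X,S)$ given $S=s$ is non-atomic. Define $$G(x,s,\boldsymbol\lambda,\boldsymbol\gamma)=\Big|\tfrac{p_s}{2\bar\alpha}\big(1-2\eta(x,s)-\langle\boldsymbol\gamma,\mathbf 1\rangle\big)+\tfrac{\langle\boldsymbol\gamma,e_s\rangle}{2\alpha_s}\Big|-\tfrac{p_s}{2\bar\alpha}\big(1-\langle\boldsymbol\gamma,\mathbf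 1\rangle\big)-\langle\boldsymbol\lambda,e_s\rangle-\tfrac{\langle\boldsymbol\gamma,e_s\rangle}{2\alpha_s}.$$ *)

From mathcomp Require Import all_boot all_order all_algebra.
From mathcomp Require Import all_classical all_reals all_analysis.
Set Implicit Arguments. Unset Strict Implicit. Unset Printing Implicit Defensive.
Import Order.TTheory GRing.Theory Num.Theory.
Local Open Scope classical_set_scope.
Local Open Scope ring_scope.

Definition borelRd (R : realType) (d : nat) : set (set 'rV[R]_d) :=
  <<s (@open 'M[R^o]_(1, d)) >>.

Definition prob d0 (Omega : measurableType d0) (R : realType)
  (P : probability Omega R) (E : set Omega) : R := fine (P E).

(* classifier with abstention: None = reject r, Some b = predicted label b *)
Definition classifier (R : realType) (d K : nat) :=
  'rV[R]_d -> 'I_K -> option bool.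

(* measurability of g : R^d x [K] -> {0,1,r} (discrete sigma-algebras on
   [K] and {0,1,r}) *)
Definition measurable_classifier (R : realType) (d K : nat)
  (g : classifier R d K) : Prop :=
  forall (s : 'I_K) (v : option bool), borelRd [set x | g x s = v].


Definition p_of d0 (Omega : measurableType d0) (R : realType)
  (P : probability Omega R) (K : nat) (S : Omega -> 'I_K) (s : 'I_K) : R :=
  prob P [set w | S w = s].

Definition alphabar d0 (Omega : measurableType d0) (R : realType)
  (P : probability Omega R) (K : nat) (S : Omega -> 'I_K) (alpha : 'I_K -> R) : R :=
  \sum_(s < K) p_of P S s * alpha s.

Definition risk d0 (Omega : measurableType d0) (R : realType)
  (P : probability Omega R) (d K : nat) (X : Omega -> 'rV[R]_d)
  (S : Omega -> 'I_K) (Y : Omega -> bool) (g : classifier R d K) : R :=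
  prob P [set w | g (X w) (S w) <> None /\ g (X w) (S w) <> Some (Y w)]
  / prob P [set w | g (X w) (S w) <> None].

Definition NA d0 (Omega : measurableType d0) (R : realType)
  (P : probability Omega R) (d K : nat) (X : Omega -> 'rV[R]_d)
  (S : Omega -> 'I_K) (g : classifier R d K) (s : 'I_K) : R :=
  prob P [set w | S w = s /\ g (X w) (S w) <> None] / prob P [set w | S w = s].

Definition PTs d0 (Omega : measurableType d0) (R : realType)
  (P : probability Omega R) (d K : nat) (X : Omega -> 'rV[R]_d)
  (S : Omega -> 'I_K) (g : classifier R d K) (s : 'I_K) : R :=
  prob P [set w | S w = s /\ g (X w) (S w) = Some true]
  / prob P [set w | S w = s /\ g (X w) (S w) <> None].

Definition PT d0 (Omega : measurableType d0) (R : realType)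
  (P : probability Omega R) (d K : nat) (X : Omega -> 'rV[R]_d)
  (S : Omega -> 'I_K) (g : classifier R d K) : R :=
  prob P [set w | g (X w) (S w) = Some true]
  / prob P [set w | g (X w) (S w) <> None].

Definition DPWA_feasible d0 (Omega : measurableType d0) (R : realType)
  (P : probability Omega R) (d K : nat) (X : Omega -> 'rV[R]_d)
  (S : Omega -> 'I_K) (alpha : 'I_K -> R) (g : classifier R d K) : Prop :=
  measurable_classifier g /\
  forall s : 'I_K, NA P X S g s = alpha s /\ PTs P X S g s = PT P X S g.

Definition Gfun d0 (Omega : measurableType d0) (R : realType)
  (P : probability Omega R) (d K : nat) (S : Omega -> 'I_K)
  (eta : 'rV[R]_d -> 'I_K -> R) (alpha : 'I_K -> R)
  (x : 'rV[R]_d) (s : 'I_K) (lam gam : 'I_K -> R) : R :=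
  let ps := p_of P S s in
  let ab := alphabar P S alpha in
  let g1 := \sum_(j < K) gam j in
  `| ps / (2 * ab) * (1 - 2 * eta x s - g1) + gam s / (2 * alpha s) |
  - ps / (2 * ab) * (1 - g1) - lam s - gam s / (2 * alpha s).

(* the dual objective
   <lambda, alpha> + sum_s E[(G(X,s,lambda,gamma))_+ | S = s],
   with E[Z | S = s] = E[Z 1{S = s}] / P(S = s) *)
Definition dual_objective d0 (Omega : measurableType d0) (R : realType)
  (P : probability Omega R) (d K : nat) (X : Omega -> 'rV[R]_d)
  (S : Omega -> 'I_K) (eta : 'rV[R]_d -> 'I_K -> R) (alpha : 'I_K -> R)
  (lam gam : 'I_K -> R) : \bar R :=
  ((\sum_(s < K) lam s * alpha s)%:E +
   \sum_(s < K) ((p_of P S s)^-1%:E *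
       \int[P]_(w in [set w | S w = s])
          (Num.max (Gfun P S eta alpha (X w) s lam gam) 0)%:E))%E.

Definition c_gam d0 (Omega : measurableType d0) (R : realType)
  (P : probability Omega R) (K : nat) (S : Omega -> 'I_K)
  (alpha gam : 'I_K -> R) (s : 'I_K) : R :=
  (alphabar P S alpha * gam s / (alpha s * p_of P S s) - \sum_(j < K) gam j) / 2.

Definition gstar d0 (Omega : measurableType d0) (R : realType)
  (P : probability Omega R) (d K : nat) (S : Omega -> 'I_K)
  (eta : 'rV[R]_d -> 'I_K -> R) (alpha lam gam : 'I_K -> R) : classifier R d K :=
  fun x s =>
    if Gfun P S eta alpha x s lam gam <= 0 then None
    else Some (1 / 2 + c_gam P S alpha gam s <= eta x s).

From mathcomp Require Import all_boot all_order all_algebra.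
From mathcomp Require Import all_classical all_reals all_analysis.
From mathcomp Require Import measurable_realfun.
From mathcomp Require Import ring lra.
Import Order.TTheory GRing.Theory Num.Theory.
Local Open Scope classical_set_scope.
Local Open Scope ring_scope.
Set Implicit Arguments. Unset Strict Implicit. Unset Printing Implicit Defensive.

(* On group s write u = uG gamstar s eta(x, s) and b = bG lamstar gamstar s, so
   that G(x, s, lamstar, gamstar) = |u| - b; a decision v (reject, or predict a
   label) has payoff cost v u b in the Lagrangian of (DPWA) at the multipliers
   (lamstar, gamstar), and g^* takes the decision opt_decision u b.
   1. Duality.  Pointwise, cost v u b + (|u| - b)_+ >= 0 for every decision,
      with equality for opt_decision.  Integrating over the groups, the
      Lagrangian of any classifier is at least minus the hinge part of the
      dual objective, with equality for g^*; on feasible classifiers the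
      Lagrangian is the risk plus a constant.  Hence g^* is optimal among
      feasible classifiers as soon as it is feasible (gstar_optimal).
   2. Feasibility.  Along any direction the dual objective increases at most
      at rate dual_slope, up to an error supported near the kinks u = 0 and
      |u| = b of the hinge.  Assumption 1 makes the kinks null, so minimality
      of (lamstar, gamstar) forces dual_slope >= 0 in every direction, and the
      coordinate directions yield the acceptance and parity constraints
      (gstar_feasible). *)

Lemma indic_in (T : Type) (R : pzRingType) (A : set T) w : A w -> \1_A w = 1 :> R.
Proof. by move=> h; rewrite indicE mem_set. Qed.

Lemma indic_out (T : Type) (R : pzRingType) (A : set T) w : ~ A w -> \1_A w = 0 :> R.
Proof. by move=> h; rewrite indicE memNset. Qed.

(* Expectation of bounded measurable functions on a probability space.  On
   this class, expectation is linear and monotone with no integrability side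
   conditions, which is all the proof needs. *)
Section Expectation.
Context d0 (Omega : measurableType d0) (R : realType) (P : probability Omega R).

Definition bounded_mfun (f : Omega -> R) : Prop :=
  measurable_fun setT f /\ exists M, forall w, `|f w| <= M.

Definition Ex (f : Omega -> R) : R := Rintegral P setT f.

Lemma bounded_mfun_integrable f : bounded_mfun f -> P.-integrable setT (EFin \o f).
Proof.
move=> [mf [M hM]]; apply: measurable_bounded_integrable => //.
  by apply: (le_lt_trans (probability_le1 P measurableT)); rewrite ltry.
exists M; split; first by rewrite num_real.
by move=> N hN x _; apply: le_trans (hM x) (ltW hN).
Qed.

Lemma bounded_mfun_cst c : bounded_mfun (fun _ => c).
Proof. by split; [exact: measurable_cst | exists `|c|]. Qed.

Lemma bounded_mfun_indic A : measurable A -> bounded_mfun (\1_A).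
Proof.
move=> mA; split; first exact: measurable_indic.
by exists 1 => w; rewrite indicE; case: (w \in A); rewrite ?normr1 ?normr0.
Qed.

Lemma bounded_mfunD f g :
  bounded_mfun f -> bounded_mfun g -> bounded_mfun (fun w => f w + g w).
Proof.
move=> [mf [M hM]] [mg [N hN]]; split; first exact: measurable_funD.
by exists (M + N) => w; apply: le_trans (ler_normD _ _) _; exact: lerD.
Qed.

Lemma bounded_mfunM f g :
  bounded_mfun f -> bounded_mfun g -> bounded_mfun (fun w => f w * g w).
Proof.
move=> [mf [M hM]] [mg [N hN]]; split; first exact: measurable_funM.
by exists (M * N) => w; rewrite normrM; apply: ler_pM.
Qed.

Lemma bounded_mfunB f g :
  bounded_mfun f -> bounded_mfun g -> bounded_mfun (fun w => f w - g w).
Proof.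
move=> hf [mg [N hN]]; apply: bounded_mfunD => //; split; first exact: measurable_funN.
by exists N => w; rewrite normrN.
Qed.

Lemma bounded_mfun_sum (I : Type) (r : seq I) (F : I -> Omega -> R) :
  (forall i, bounded_mfun (F i)) -> bounded_mfun (fun w => \sum_(i <- r) F i w).
Proof.
move=> hF; elim: r => [|i r IH].
  by under [fun w => _]funext do rewrite big_nil; exact: bounded_mfun_cst.
by under [fun w => _]funext do rewrite big_cons; exact: bounded_mfunD.
Qed.

Lemma ExD f g : bounded_mfun f -> bounded_mfun g ->
  Ex (fun w => f w + g w) = Ex f + Ex g.
Proof. by move=> hf hg; rewrite /Ex RintegralD //; exact: bounded_mfun_integrable. Qed.

Lemma ExB f g : bounded_mfun f -> bounded_mfun g ->
  Ex (fun w => f w - g w) = Ex f - Ex g.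
Proof. by move=> hf hg; rewrite /Ex RintegralB //; exact: bounded_mfun_integrable. Qed.

Lemma ExZ c f : bounded_mfun f -> Ex (fun w => c * f w) = c * Ex f.
Proof. by move=> hf; rewrite /Ex RintegralZl //; exact: bounded_mfun_integrable. Qed.

Lemma ExDZ (a b : R) f g : bounded_mfun f -> bounded_mfun g ->
  Ex (fun w => a * f w + b * g w) = a * Ex f + b * Ex g.
Proof.
move=> hf hg; rewrite ExD ?ExZ //; apply: bounded_mfunM => //; exact: bounded_mfun_cst.
Qed.

Lemma ler_Ex f g : bounded_mfun f -> bounded_mfun g ->
  (forall w, f w <= g w) -> Ex f <= Ex g.
Proof. by move=> hf hg fg; rewrite /Ex le_Rintegral //; exact: bounded_mfun_integrable. Qed.

Lemma Ex_ge0 f : (forall w, 0 <= f w) -> 0 <= Ex f.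
Proof. by move=> h; apply: Rintegral_ge0 => w _; exact: h. Qed.

Lemma Ex_cst0 : Ex (fun _ => 0) = 0.
Proof. by rewrite /Ex Rintegral_cst // mul0r. Qed.

Lemma Ex_indic A : measurable A -> Ex (\1_A) = prob P A.
Proof. by move=> mA; rewrite /Ex /Rintegral integral_indic // setIT. Qed.

Lemma Ex_sum (I : Type) (r : seq I) (F : I -> Omega -> R) :
  (forall i, bounded_mfun (F i)) ->
  Ex (fun w => \sum_(i <- r) F i w) = \sum_(i <- r) Ex (F i).
Proof.
move=> hF; elim: r => [|i r IH].
  by rewrite big_nil; under [fun w => _]funext do rewrite big_nil; exact: Ex_cst0.
rewrite big_cons -IH; under [fun w => _]funext do rewrite big_cons.
by rewrite ExD //; exact: bounded_mfun_sum.
Qed.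

Lemma integral_setE D f : measurable D -> bounded_mfun f ->
  (\int[P]_(w in D) (f w)%:E = (Ex (fun w => \1_D w * f w))%:E)%E.
Proof.
move=> mD hf; rewrite integral_mkcond /Ex /Rintegral fineK; last first.
  apply: integrable_fin_num => //; apply: bounded_mfun_integrable.
  by apply: bounded_mfunM => //; exact: bounded_mfun_indic.
apply: eq_integral => w _; rewrite patchE indicE.
by case: (w \in D); rewrite ?mul1r ?mul0r.
Qed.

Lemma probU2 (A B : set Omega) : measurable A -> measurable B ->
  A `&` B = set0 -> prob P (A `|` B) = prob P A + prob P B.
Proof.
move=> mA mB AB0; rewrite /prob measureU // fineD //.
  by rewrite ge0_fin_numE ?measure_ge0 // (le_lt_trans (probability_le1 P mA)) ?ltry.
by rewrite ge0_fin_numE ?measure_ge0 // (le_lt_trans (probability_le1 P mB)) ?ltry.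
Qed.

(* continuity from above: the probabilities of a nonincreasing sequence of
   events with a null intersection are eventually small *)
Lemma prob_eventually_small (F : nat -> set Omega) :
  (forall n, measurable (F n)) -> (forall n m, (n <= m)%N -> F m `<=` F n) ->
  P (\bigcap_n F n) = 0%E ->
  forall eps, 0 < eps -> exists N, forall n, (N <= n)%N -> prob P (F n) <= eps.
Proof.
move=> mF hdec h0 eps ep.
have := @nonincreasing_cvg_mu _ _ _ P F
  (le_lt_trans (probability_le1 P (mF 0%N)) (ltry _)) mF (bigcapT_measurable mF)
  (fun n m nm => introT (subsetPset _ _) (hdec n m nm)).
set limit := (Q in _ --> Q); have -> : limit = 0%E by exact: h0.
move=> /fine_cvgP[_] /cvgrPdist_lt /(_ eps ep)[N _ hN].
exists N => n nN; have := hN n nN; rewrite /= sub0r normrN => /ltW.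
by apply: le_trans; exact: ler_norm.
Qed.

Variables (I : finType) (S : Omega -> I).
Hypothesis mS : forall i, measurable (S @^-1` [set i]).

Lemma measurable_fibered (Q : I -> set Omega) : (forall i, measurable (Q i)) ->
  measurable [set w | Q (S w) w].
Proof.
move=> mQ; rewrite (_ : [set w | _] = \bigcup_(i in setT) (S @^-1` [set i] `&` Q i)).
  by apply: fin_bigcup_measurable => [|i _]; [exact: finite_finset|exact: measurableI].
by apply/seteqP; split => [w /= h|w [i _ [/= <-]]] //; exists (S w).
Qed.

Lemma prob_partition (A : set Omega) : measurable A ->
  prob P A = \sum_i prob P (S @^-1` [set i] `&` A).
Proof.
move=> mA; rewrite -Ex_indic //.
rewrite (_ : \1_A = fun w => \sum_i \1_(S @^-1` [set i] `&` A) w).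
  rewrite Ex_sum => [|i]; last by apply: bounded_mfun_indic; exact: measurableI.
  by apply: eq_bigr => i _; rewrite Ex_indic //; exact: measurableI.
apply/funext => w; rewrite (bigD1 (S w)) //= big1 ?addr0.
  by rewrite indicI /= [X in _ = X * _]indicE mem_set ?mul1r.
move=> i /negPf hi; rewrite indicI /= [X in X * _]indicE memNset ?mul0r //= => hSi.
by rewrite hSi eqxx in hi.
Qed.

End Expectation.
(* the real-valued type R cannot be inferred from the statement alone *)
Arguments bounded_mfun_indic {d0 Omega R A}.

(* For each group s the
   dual integrand is hinge u b with u affine in eta, while a classifier taking
   decision v (None = reject, Some y = predict y) pays cost v u b in the
   Lagrangian.  The decision opt_decision u b minimises cost v u b, and its
   value - hinge u b is the one-sided derivative of the hinge. *)
Section Hinge.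
Variable R : realDomainType.

Definition hinge (u b : R) : R := Num.max (`|u| - b) 0.

Definition cost (v : option bool) (u b : R) : R :=
  if v is Some y then (if y then b + u else b - u) else 0.

Definition opt_decision (u b : R) : option bool :=
  if `|u| - b <= 0 then None else Some (u <= 0).

Lemma max0_cases (x : R) :
  (0 <= x /\ Num.max x 0 = x) \/ (x < 0 /\ Num.max x 0 = 0).
Proof.
have [h|h] := lerP 0 x.
  by left; split => //; exact/max_idPl.
by right; split => //; exact/max_idPr/ltW.
Qed.

Lemma norm_bounds (x : R) : x <= `|x| /\ - x <= `|x|.
Proof. by rewrite -[in X in _ /\ X]normrN !ler_norm. Qed.

Lemma scaled_norm_bounds (t x : R) : 0 <= t -> t * x <= t * `|x| /\ - (t * x) <= t * `|x|.
Proof.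
move=> t0; have [hx hNx] := norm_bounds x.
by rewrite -mulrN; split; exact: ler_wpM2l.
Qed.

Lemma cost_hinge_ge0 v u b : 0 <= cost v u b + hinge u b.
Proof.
have [? ?] := norm_bounds u; rewrite /hinge; case: v => [[]|] /=;
by case: (max0_cases (`|u| - b)) => [[? ->]|[? ->]]; lra.
Qed.

Lemma cost_hinge_opt u b : cost (opt_decision u b) u b + hinge u b = 0.
Proof.
rewrite /opt_decision /hinge; case: (lerP (`|u| - b) 0) => h /=.
  by rewrite addr0.
case: (lerP u 0) => hu /=.
  by rewrite (ler0_norm hu); ring.
by rewrite (gtr0_norm hu); ring.
Qed.

Lemma cost_bound v u b : `|cost v u b| <= `|u| + `|b|.
Proof.
have [? ?] := norm_bounds u; have [? ?] := norm_bounds b; rewrite ler_norml.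
by case: v => [[]|] /=; apply/andP; split; lra.
Qed.

Lemma hinge_lipschitz (u0 u1 b0 b1 t : R) : 0 <= t ->
  hinge (u0 + t * u1) (b0 + t * b1) - hinge u0 b0 <= t * (`|u1| + `|b1|).
Proof.
move=> t0; have [_ tb] := scaled_norm_bounds b1 t0.
have tu : `|u0 + t * u1| <= `|u0| + t * `|u1|.
  by rewrite -[t in t * `|u1|]ger0_norm // -normrM ler_normD.
have tL : 0 <= t * (`|u1| + `|b1|) by apply: mulr_ge0 => //; exact: addr_ge0.
rewrite /hinge mulrDr in tL *.
case: (max0_cases (`|u0 + t * u1| - (b0 + t * b1))) => [[? ->]|[? ->]];
by case: (max0_cases (`|u0| - b0)) => [[? ->]|[? ->]]; lra.
Qed.

Lemma hinge_linear (u0 u1 b0 b1 t : R) : 0 <= t ->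
  t * (`|u1| + `|b1|) < `|u0| -> t * (`|u1| + `|b1|) < `| `|u0| - b0| ->
  hinge (u0 + t * u1) (b0 + t * b1) - hinge u0 b0 =
  - t * cost (opt_decision u0 b0) u1 b1.
Proof.
move=> t0; have [? ?] := scaled_norm_bounds u1 t0; have [? ?] := scaled_norm_bounds b1 t0.
rewrite mulrDr /hinge /opt_decision => hu; rewrite ltr_normr => hb.
have [u0n|u0p] := lerP u0 0.
- rewrite (ler0_norm u0n) in hu hb *; rewrite (ler0_norm (_ : u0 + t * u1 <= 0)); last by lra.
  case/orP: hb => hb; case: (lerP (- u0 - b0) 0) => hs /=;
  by case: (max0_cases (- (u0 + t * u1) - (b0 + t * b1))) => [[? ->]|[? ->]]; lra.
- rewrite (gtr0_norm u0p) in hu hb *; rewrite (gtr0_norm (_ : 0 < u0 + t * u1)); last by lra.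
  case/orP: hb => hb; case: (lerP (u0 - b0) 0) => hs /=;
  by case: (max0_cases (u0 + t * u1 - (b0 + t * b1))) => [[? ->]|[? ->]]; lra.
Qed.

(* first-order expansion of the hinge, with an error term supported near the
   kinks; this is what makes the dual objective differentiable once the kinks
   are null events *)
Lemma hinge_directional (u0 u1 b0 b1 t : R) : 0 <= t ->
  hinge (u0 + t * u1) (b0 + t * b1) - hinge u0 b0 <=
  - t * cost (opt_decision u0 b0) u1 b1 +
  (if (`|u0| <= t * (`|u1| + `|b1|)) || (`| `|u0| - b0| <= t * (`|u1| + `|b1|))
   then 2 * t * (`|u1| + `|b1|) else 0).
Proof.
move=> t0; case: ifPn => [_|]; last first.
  by rewrite negb_or -!ltNge => /andP[hu hb]; rewrite (hinge_linear t0 hu hb) addr0.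
have := hinge_lipschitz u0 u1 b0 b1 t0.
have := cost_bound (opt_decision u0 b0) u1 b1; rewrite ler_norml => /andP[_ c_le].
have := ler_wpM2l t0 c_le; lra.
Qed.

End Hinge.

(* Measurability of boolean tests on the real maps t |-> a t + c, |a t + c|
   and hinge (a t + c) b, through which eta enters g^*, the dual integrand and
   the kink events. *)
Lemma measurable_boolset d (T : measurableType d) (b : T -> bool) :
  measurable_fun setT b -> measurable [set x | b x].
Proof. by move=> mb; have := mb measurableT [set true] I; rewrite setTI. Qed.

Lemma measurable_affine (R : realType) (a c : R) :
  measurable_fun setT (fun t : R => a * t + c).
Proof. by apply: measurable_funD => //; exact: measurable_funM. Qed.

Lemma measurable_norm_affine (R : realType) (a c : R) :
  measurable_fun setT (fun t : R => `|a * t + c|).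
Proof. exact: measurableT_comp (@normr_measurable R setT) (measurable_affine a c). Qed.

Lemma measurable_hinge_affine (R : realType) (a c b : R) :
  measurable_fun setT (fun t : R => hinge (a * t + c) b).
Proof.
by apply: measurable_maxr => //; apply: measurable_funB => //; exact: measurable_norm_affine.
Qed.

Lemma measurable_opt_decision (R : realType) (a c b : R) (v : option bool) :
  measurable [set t : R | opt_decision (a * t + c) b = v].
Proof.
pose G t := `|a * t + c| - b.
have mG : measurable_fun setT G.
  by apply: measurable_funB => //; exact: measurable_norm_affine.
have mu := measurable_affine a c.
case: v => [[]|].
- rewrite (_ : [set t | _] = [set t | (0 < G t) && (a * t + c <= 0)]).
    apply: measurable_boolset.
    by apply: measurable_and; [exact: measurable_fun_ltr|exact: measurable_fun_ler].
  apply/seteqP; split => t; rewrite /= /opt_decision /G.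
    by case: (lerP (G t) 0) => //= _ [].
  by case: (lerP (G t) 0) => //= _ ->.
- rewrite (_ : [set t | _] = [set t | (0 < G t) && (0 < a * t + c)]).
    by apply: measurable_boolset; apply: measurable_and; exact: measurable_fun_ltr.
  apply/seteqP; split => t; rewrite /= /opt_decision /G; case: (lerP (G t) 0) => //= _.
    by case=> /negbT; rewrite -ltNge.
  by move=> h; rewrite leNgt h.
- rewrite (_ : [set t | _] = [set t | G t <= 0]).
    by apply: measurable_boolset; exact: measurable_fun_ler.
  by apply/seteqP; split => t; rewrite /= /opt_decision /G; case: (lerP (G t) 0).
Qed.

Lemma small_multiple_of_inverse (R : realType) (L m : R) : 0 <= L -> 0 < m ->
  exists n : nat, (n.+1%:R)^-1 * L < m.
Proof.
move=> L0 m0; exists (Num.Def.archi_bound (L / m)).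
have h := archi_boundP (divr_ge0 L0 (ltW m0)).
rewrite ltr_pdivrMr // in h; rewrite mulrC ltr_pdivrMr //.
by apply: lt_le_trans h _; rewrite mulrC ler_wpM2l ?(ltW m0) // ler_nat.
Qed.

(* the per-group Lagrangian identity: for a group with acceptance mass
   N1 + N0 = a p and positive mass N1 = Q a p, the Lagrangian payoff equals
   its error mass (N1 - H1 + H0) / ab plus multiplier terms *)
Lemma lagrangian_group_identity (R : realFieldType) (p ab a l g G1 N1 N0 H1 H0 Q : R) :
  p != 0 -> ab != 0 -> a != 0 -> N1 + N0 = a * p -> N1 = Q * (a * p) ->
  let b := p / (2 * ab) * (1 - G1) + l + g / (2 * a) in
  let c := p / (2 * ab) * (1 - G1) + g / (2 * a) in
  p^-1 * ((b + c) * N1 + - (p / ab) * H1 + (b - c) * N0 - - (p / ab) * H0)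
  = (N1 - H1 + H0) / ab + l * a + g * Q - G1 * N1 / ab.
Proof.
move=> p0 ab0 a0 hN hQ b c.
have eQ : Q = N1 / (a * p) by rewrite hQ mulfK // mulf_neq0.
have eN0 : N0 = a * p - N1 by rewrite -hN addrC addKr.
by rewrite /b /c eQ eN0; field; rewrite p0 ab0 a0.
Qed.

(* The setting of the theorem: (X, S, Y) is a random triple, every group has
   positive probability, eta is a version of E[Y | X, S] with values in [0, 1],
   and the abstention levels alpha_s are positive. *)
Section DPWA.
Context (R : realType) (d K : nat) (d0 : measure_display)
  (Omega : measurableType d0) (P : probability Omega R)
  (X : Omega -> 'rV[R]_d) (S : Omega -> 'I_K) (Y : Omega -> bool)
  (eta : 'rV[R]_d -> 'I_K -> R) (alpha : 'I_K -> R).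
Hypothesis mX : forall A, borelRd A -> measurable (X @^-1` A).
Hypothesis mS : forall s : 'I_K, measurable (S @^-1` [set s]).
Hypothesis mY : measurable (Y @^-1` [set true]).
Hypothesis ps_gt0 : forall s : 'I_K, 0 < p_of P S s.
Hypothesis alpha_gt0 : forall s : 'I_K, 0 < alpha s.
Hypothesis eta01 : forall x s, 0 <= eta x s <= 1.
Hypothesis eta_meas : forall (s : 'I_K) (B : set R), measurable B ->
  borelRd [set x | B (eta x s)].
Hypothesis eta_cond : forall (s : 'I_K) (A : set 'rV[R]_d), borelRd A ->
  (\int[P]_(w in [set w | A (X w) /\ S w = s]) ((Y w)%:R)%:E =
   \int[P]_(w in [set w | A (X w) /\ S w = s]) (eta (X w) (S w))%:E)%E.

Local Notation p s := (p_of P S s).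
Local Notation ab := (alphabar P S alpha).
Local Notation group s := (S @^-1` [set s]).

Lemma measurable_eta_event s (B : set R) : measurable B ->
  measurable [set w | B (eta (X w) s)].
Proof. by move=> mB; exact: mX (eta_meas s mB). Qed.

Lemma bounded_eta s : bounded_mfun (fun w => eta (X w) s).
Proof.
split; first by move=> _ B mB; rewrite setTI; exact: measurable_eta_event.
by exists 1 => w; have /andP[h0 h1] := eta01 (X w) s; rewrite ger0_norm.
Qed.

Lemma bounded_hinge_eta s (k c b : R) :
  bounded_mfun (fun w => hinge (k * eta (X w) s + c) b).
Proof.
split; first exact: measurableT_comp (measurable_hinge_affine k c b) (bounded_eta s).1.
exists (`|k| + `|c| + `|b|) => w; have /andP[t0 t1] := eta01 (X w) s.
have hkc := ler_normD (k * eta (X w) s) c; rewrite normrM (ger0_norm t0) in hkc.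
have hk : `|k| * eta (X w) s <= `|k| by rewrite ler_piMr.
have [_ hb] := norm_bounds b.
rewrite ger0_norm; last by rewrite le_max lexx orbT.
by rewrite ge_max; apply/andP; split; [lra | rewrite !addr_ge0].
Qed.

Lemma alphabar_gt0 : 0 < ab.
Proof.
have [w _] : exists w : Omega, True.
  apply/not_existsP => hw; have : P setT = 0%E.
    by rewrite (_ : setT = set0) ?measure0 //; apply/seteqP; split => // w _; exact: (hw w).
  by rewrite probability_setT => /eqP; rewrite onee_eq0.
rewrite /alphabar (bigD1 (S w)) //=.
apply: ltr_pwDl; first exact: mulr_gt0.
by apply: sumr_ge0 => i _; apply: mulr_ge0; exact/ltW.
Qed.

Definition decision (g : classifier R d K) s v := [set w | g (X w) s = v].
Definition mass g s v := prob P (group s `&` decision g s v).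
Definition eta_mass g s v :=
  Ex P (fun w => \1_(group s `&` decision g s v) w * eta (X w) s).

Lemma measurable_decision g s v : measurable_classifier g ->
  measurable (decision g s v).
Proof. by move=> hg; exact: mX (hg s v). Qed.

Lemma measurable_group_decision g s v : measurable_classifier g ->
  measurable (group s `&` decision g s v).
Proof. by move=> hg; exact: measurableI (mS s) (measurable_decision s v hg). Qed.

Lemma decisions_disjoint g s : decision g s (Some true) `&` decision g s (Some false) = set0.
Proof. by apply/seteqP; split => // w [h1 h2]; rewrite /decision /= h1 in h2. Qed.

Lemma prob_group_accept g s : measurable_classifier g ->
  prob P [set w | S w = s /\ g (X w) (S w) <> None] =
  mass g s (Some true) + mass g s (Some false).
Proof.
move=> hg; rewrite -probU2; try exact: measurable_group_decision.
  congr prob; apply/seteqP; split => w /=.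
    move=> [<- h]; case E: (g (X w) (S w)) h => [[]|] // _;
    by [left|right]; split => //; exact: E.
  by move=> [] [/= <- ->].
by rewrite setIACA decisions_disjoint setI0.
Qed.

Lemma prob_group_positive g s :
  prob P [set w | S w = s /\ g (X w) (S w) = Some true] = mass g s (Some true).
Proof. by congr prob; apply/seteqP; split => w /= [hs h]; rewrite hs in h *. Qed.

Lemma Y_indicator w : ((Y w)%:R : R) = \1_(Y @^-1` [set true]) w.
Proof.
case hY: (Y w).
  by rewrite indic_in //= hY.
by rewrite indic_out //= hY.
Qed.

Lemma prob_decision_Y g s v : measurable_classifier g ->
  prob P (group s `&` decision g s v `&` Y @^-1` [set true]) = eta_mass g s v.
Proof.
move=> hg; have mD := measurable_group_decision s v hg.
have bY : bounded_mfun (\1_(Y @^-1` [set true]) : Omega -> R) := bounded_mfun_indic mY.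
have := eta_cond s (hg s v).
rewrite (_ : [set w | _ /\ _] = group s `&` decision g s v); last by rewrite setIC.
rewrite [RHS in _ = RHS](eq_integral (fun w => (eta (X w) s)%:E)); last first.
  by move=> w /set_mem [/= ->].
rewrite [LHS in LHS = _](eq_integral (fun w => (\1_(Y @^-1` [set true]) w)%:E)); last first.
  by move=> w _; rewrite Y_indicator.
rewrite !integral_setE //; last exact: bounded_eta.
move=> [hE]; rewrite /eta_mass -hE -Ex_indic; last exact: measurableI.
by rewrite (indicI R (group s `&` decision g s v)).
Qed.

Lemma prob_decision_notY g s v : measurable_classifier g ->
  prob P (group s `&` decision g s v `&` ~` (Y @^-1` [set true])) =
  mass g s v - eta_mass g s v.
Proof.
move=> hg; have mD := measurable_group_decision s v hg.
have split_Y : mass g s v = prob P (group s `&` decision g s v `&` Y @^-1` [set true]) +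
    prob P (group s `&` decision g s v `&` ~` (Y @^-1` [set true])).
  rewrite /mass -probU2; first by rewrite -setIUr setUv setIT.
  - exact: measurableI.
  - by apply: measurableI => //; exact: measurableC.
  - by rewrite setIACA setICr setI0.
by rewrite split_Y prob_decision_Y // [RHS]addrC addKr.
Qed.

(* The error event on group s splits into {g = 1, Y = 0} and {g = 0, Y = 1}. *)
Lemma prob_error g : measurable_classifier g ->
  prob P [set w | g (X w) (S w) <> None /\ g (X w) (S w) <> Some (Y w)] =
  \sum_s (mass g s (Some true) - eta_mass g s (Some true) + eta_mass g s (Some false)).
Proof.
move=> hg; pose Yt := Y @^-1` [set true].
pose err s := [set w | g (X w) s <> None /\ g (X w) s <> Some (Y w)].
have errE s : err s =
    (decision g s (Some true) `&` ~` Yt) `|` (decision g s (Some false) `&` Yt).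
  apply/seteqP; split => w; rewrite /err /decision /Yt /preimage /=;
  by case: (g (X w) s) => [[]|]; case: (Y w) => //=; intuition congruence.
rewrite (prob_partition P mS (A := [set w | err (S w) w])); last first.
  apply: measurable_fibered => // s; rewrite errE.
  by apply: measurableU; apply: measurableI => //; try apply: measurableC => //;
    exact: measurable_decision.
apply: eq_bigr => s _.
rewrite (_ : _ `&` _ = (group s `&` decision g s (Some true) `&` ~` Yt) `|`
                      (group s `&` decision g s (Some false) `&` Yt)); last first.
  apply/seteqP; split => w.
    by move=> [hs]; rewrite /= hs -/(err s w) errE => -[[h1 h2]|[h1 h2]]; [left|right].
  by move=> [[[hs h1] h2]|[[hs h1] h2]]; split=> //=; rewrite hs -/(err s w) errE; [left|right].
rewrite probU2 ?prob_decision_Y ?prob_decision_notY //.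
- by apply: measurableI; [exact: measurable_group_decision|exact: measurableC].
- by apply: measurableI => //; exact: measurable_group_decision.
- by rewrite setIACA setICl setI0.
Qed.

Lemma prob_accept g : measurable_classifier g ->
  prob P [set w | g (X w) (S w) <> None] =
  \sum_s (mass g s (Some true) + mass g s (Some false)).
Proof.
move=> hg; rewrite (prob_partition P mS); last first.
  apply: (measurable_fibered mS (Q := fun s => ~` decision g s None)) => s.
  exact/measurableC/measurable_decision.
by apply: eq_bigr => s _; rewrite -prob_group_accept.
Qed.

Lemma prob_positive g : measurable_classifier g ->
  prob P [set w | g (X w) (S w) = Some true] = \sum_s mass g s (Some true).
Proof.
move=> hg; rewrite (prob_partition P mS); last first.
  by apply: (measurable_fibered mS (Q := fun s => decision g s (Some true))) => s;
    exact: measurable_decision.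
by apply: eq_bigr => s _; rewrite -prob_group_positive.
Qed.

(* the constraints of (DPWA) in terms of masses: group s accepts a fraction
   alpha_s of its members, and the positive rate among accepted members is the
   same in every group, namely P(g = 1) / P(g <> r) = P(g = 1) / ab *)
Lemma feasible_masses g : DPWA_feasible P X S alpha g ->
  [/\ forall s, mass g s (Some true) + mass g s (Some false) = alpha s * p s,
      prob P [set w | g (X w) (S w) <> None] = ab &
      forall s, mass g s (Some true) =
                (\sum_j mass g j (Some true)) / ab * (alpha s * p s)].
Proof.
move=> [hg hf].
have hN s : mass g s (Some true) + mass g s (Some false) = alpha s * p s.
  have [+ _] := hf s; rewrite /NA prob_group_accept // => <-.
  by rewrite divfK //; exact: lt0r_neq0 (ps_gt0 s).
have hab : prob P [set w | g (X w) (S w) <> None] = ab.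
  by rewrite prob_accept //; apply: eq_bigr => s _; rewrite hN mulrC.
split => // s; have [_] := hf s.
rewrite /PTs /PT prob_group_positive prob_group_accept // hN hab prob_positive // => <-.
by rewrite divfK //; apply: lt0r_neq0; exact: mulr_gt0 (alpha_gt0 s) (ps_gt0 s).
Qed.

Definition uG (gam : 'I_K -> R) s t :=
  p s / (2 * ab) * (1 - 2 * t - \sum_j gam j) + gam s / (2 * alpha s).
Definition bG (lam gam : 'I_K -> R) s :=
  p s / (2 * ab) * (1 - \sum_j gam j) + lam s + gam s / (2 * alpha s).

Lemma GfunE x s lam gam :
  Gfun P S eta alpha x s lam gam = `|uG gam s (eta x s)| - bG lam gam s.
Proof. by rewrite /Gfun /uG /bG /=; ring. Qed.

Lemma uG0 gam s : uG gam s 0 = p s / (2 * ab) * (1 - \sum_j gam j) + gam s / (2 * alpha s).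
Proof. by rewrite /uG mulr0 subr0. Qed.

Lemma uG_affine gam s t : uG gam s t = - (p s / ab) * t + uG gam s 0.
Proof. by rewrite /uG; field; rewrite (lt0r_neq0 alphabar_gt0) (lt0r_neq0 (alpha_gt0 s)). Qed.

Lemma bounded_dual_integrand lam gam s :
  bounded_mfun (fun w => hinge (uG gam s (eta (X w) s)) (bG lam gam s)).
Proof.
rewrite (_ : (fun w => _) =
  fun w => hinge (- (p s / ab) * eta (X w) s + uG gam s 0) (bG lam gam s)).
  exact: bounded_hinge_eta.
by apply/funext => w; rewrite uG_affine.
Qed.

Lemma dual_objectiveE lam gam : dual_objective P X S eta alpha lam gam =
  (\sum_s lam s * alpha s + \sum_s (p s)^-1 *
     Ex P (fun w => \1_(group s) w * hinge (uG gam s (eta (X w) s)) (bG lam gam s)))%:E.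
Proof.
rewrite /dual_objective EFinD; congr (_ + _)%E; rewrite -sumEFin; apply: eq_bigr => s _.
rewrite EFinM -integral_setE //; last exact: bounded_dual_integrand.
by congr (_ * _)%E; apply: eq_integral => w _; rewrite /hinge GfunE.
Qed.

Lemma indic_decision g s v w : \1_(decision g s v) w = (g (X w) s == v)%:R :> R.
Proof. by rewrite indicE; case: eqP => h; [rewrite mem_set|rewrite memNset]. Qed.

Lemma group_costE g s (u b : R) w :
  \1_(group s) w * cost (g (X w) s) u b =
  \1_(group s `&` decision g s (Some true)) w * (b + u) +
  \1_(group s `&` decision g s (Some false)) w * (b - u).
Proof. by rewrite !indicI /= !indic_decision; case: (g (X w) s) => [[]|] /=; ring. Qed.

Lemma bounded_affine_eta s (k c : R) : bounded_mfun (fun w => k * eta (X w) s + c).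
Proof.
apply: bounded_mfunD; last exact: bounded_mfun_cst.
by apply: bounded_mfunM; [exact: bounded_mfun_cst|exact: bounded_eta].
Qed.

Lemma bounded_group_cost g s (k c b : R) : measurable_classifier g ->
  bounded_mfun (fun w => \1_(group s) w * cost (g (X w) s) (k * eta (X w) s + c) b).
Proof.
move=> hg; under [fun w => _]funext do rewrite group_costE.
apply: bounded_mfunD; apply: bounded_mfunM; try exact/bounded_mfun_indic/measurable_group_decision.
  by apply: bounded_mfunD; [exact: bounded_mfun_cst|exact: bounded_affine_eta].
by apply: bounded_mfunB; [exact: bounded_mfun_cst|exact: bounded_affine_eta].
Qed.

Lemma Ex_group_cost g s (k c b : R) : measurable_classifier g ->
  Ex P (fun w => \1_(group s) w * cost (g (X w) s) (k * eta (X w) s + c) b) =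
  (b + c) * mass g s (Some true) + k * eta_mass g s (Some true) +
  ((b - c) * mass g s (Some false) - k * eta_mass g s (Some false)).
Proof.
move=> hg; pose I v := \1_(group s `&` decision g s v) : Omega -> R.
have bI v : bounded_mfun (I v) by exact/bounded_mfun_indic/measurable_group_decision.
have bIeta v : bounded_mfun (fun w => I v w * eta (X w) s).
  by apply: bounded_mfunM => //; exact: bounded_eta.
rewrite (_ : (fun w => _) = fun w =>
   ((b + c) * I (Some true) w + k * (I (Some true) w * eta (X w) s)) +
   ((b - c) * I (Some false) w + - k * (I (Some false) w * eta (X w) s))); last first.
  by apply/funext => w; rewrite group_costE /I; ring.
rewrite ExD; try by apply: bounded_mfunD; apply: bounded_mfunM => //; exact: bounded_mfun_cst.
rewrite !ExDZ // !Ex_indic ?mulNr //; exact: measurable_group_decision.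
Qed.

Variables lamstar gamstar : 'I_K -> R.
Local Notation u0 s w := (uG gamstar s (eta (X w) s)).
Local Notation b0 s := (bG lamstar gamstar s).
Local Notation gs := (gstar P S eta alpha lamstar gamstar).

(* in threshold form: u0 <= 0 exactly when eta >= 1/2 + c_{gamstar, s} *)
Lemma uG_threshold s t :
  uG gamstar s t = p s / ab * (1 / 2 + c_gam P S alpha gamstar s - t).
Proof.
rewrite /uG /c_gam; field.
by rewrite (lt0r_neq0 (ps_gt0 s)) (lt0r_neq0 alphabar_gt0) (lt0r_neq0 (alpha_gt0 s)).
Qed.

Lemma gstar_opt_decision x s : gs x s = opt_decision (uG gamstar s (eta x s)) (b0 s).
Proof.
rewrite /gstar /opt_decision GfunE; case: (lerP (`|uG gamstar s (eta x s)| - b0 s) 0) => //= _.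
by rewrite uG_threshold pmulr_rle0 ?subr_le0 // divr_gt0 // alphabar_gt0.
Qed.

Lemma gstar_measurable : measurable_classifier gs.
Proof.
move=> s v; rewrite (_ : [set x | gs x s = v] = [set x |
    [set t | opt_decision (- (p s / ab) * t + uG gamstar s 0) (b0 s) = v] (eta x s)]).
  by apply: eta_meas; exact: measurable_opt_decision.
by apply/funext => x /=; rewrite gstar_opt_decision (uG_affine gamstar s (eta x s)).
Qed.

Definition lagrangian (g : classifier R d K) := \sum_s (p s)^-1 *
  Ex P (fun w => \1_(group s) w * cost (g (X w) s) (u0 s w) (b0 s)).
Definition dual_hinge := \sum_s (p s)^-1 *
  Ex P (fun w => \1_(group s) w * hinge (u0 s w) (b0 s)).

Lemma group_cost_affine g s w : \1_(group s) w * cost (g (X w) s) (u0 s w) (b0 s) =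
  \1_(group s) w * cost (g (X w) s) (- (p s / ab) * eta (X w) s + uG gamstar s 0) (b0 s).
Proof. by rewrite uG_affine. Qed.

Lemma lagrangian_lower_bound g : measurable_classifier g ->
  0 <= lagrangian g + dual_hinge.
Proof.
move=> hg; rewrite /lagrangian /dual_hinge -big_split /=; apply: sumr_ge0 => s _.
rewrite -mulrDr -ExD; last first.
- by apply: bounded_mfunM; [exact/bounded_mfun_indic/mS|exact: bounded_dual_integrand].
- by under [fun w => _]funext do rewrite group_cost_affine; exact: bounded_group_cost.
apply: mulr_ge0; first by rewrite invr_ge0 ltW.
by apply: Ex_ge0 => w; rewrite -mulrDr mulr_ge0 ?cost_hinge_ge0 // indicE ler0n.
Qed.

Lemma lagrangian_gstar : lagrangian gs + dual_hinge = 0.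
Proof.
rewrite /lagrangian /dual_hinge -big_split /=; apply: big1 => s _.
rewrite -mulrDr -ExD; last first.
- by apply: bounded_mfunM; [exact/bounded_mfun_indic/mS|exact: bounded_dual_integrand].
- under [fun w => _]funext do rewrite group_cost_affine.
  by apply: bounded_group_cost; exact: gstar_measurable.
rewrite (_ : (fun w => _) = fun _ => 0) ?Ex_cst0 ?mulr0 //.
by apply/funext => w; rewrite -mulrDr gstar_opt_decision cost_hinge_opt mulr0.
Qed.

Lemma lagrangian_feasible g : DPWA_feasible P X S alpha g ->
  lagrangian g = risk P X S Y g + \sum_s lamstar s * alpha s.
Proof.
move=> hf; have hg := hf.1; have [hN hab hQ] := feasible_masses hf.
set Q := (\sum_j mass g j (Some true)) / ab.
rewrite /lagrangian (eq_bigr (fun s =>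
    (mass g s (Some true) - eta_mass g s (Some true) + eta_mass g s (Some false)) / ab
    + lamstar s * alpha s + gamstar s * Q
    - (\sum_j gamstar j) * mass g s (Some true) / ab)); last first.
  move=> s _; under [fun w => _]funext do rewrite group_cost_affine.
  rewrite Ex_group_cost // uG0 addrA; apply: lagrangian_group_identity => //.
  - exact: lt0r_neq0 (ps_gt0 s).
  - exact: lt0r_neq0 alphabar_gt0.
  - exact: lt0r_neq0 (alpha_gt0 s).
rewrite /risk prob_error // hab [LHS]sumrB ![in LHS]big_split /= -!mulr_suml -mulr_sumr /Q.
ring.
Qed.

Lemma gstar_optimal g : DPWA_feasible P X S alpha g ->
  DPWA_feasible P X S alpha gs -> risk P X S Y gs <= risk P X S Y g.
Proof.
move=> hg hs; have := lagrangian_lower_bound hg.1; have := lagrangian_gstar.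
by rewrite !lagrangian_feasible //; lra.
Qed.

(* Feasibility of g^*: the first-order optimality conditions of the dual
   problem, along the coordinate directions, are exactly the constraints. *)
Hypothesis hmin : forall lam gam : 'I_K -> R,
  (dual_objective P X S eta alpha lamstar gamstar <=
   dual_objective P X S eta alpha lam gam)%E.
Hypothesis assump1 : forall (s : 'I_K) (t : R),
  P [set w | S w = s /\ eta (X w) (S w) = t] = 0%E.

Local Notation N1 s := (mass gs s (Some true)).
Local Notation N0 s := (mass gs s (Some false)).

Lemma Ex_gstar_cost s (c b : R) :
  Ex P (fun w => \1_(group s) w * cost (gs (X w) s) c b) = (b + c) * N1 s + (b - c) * N0 s.
Proof.
rewrite (_ : (fun w => _) =
    fun w => \1_(group s) w * cost (gs (X w) s) (0 * eta (X w) s + c) b).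
  by rewrite Ex_group_cost ?mul0r ?addr0 ?subr0 //; exact: gstar_measurable.
by apply/funext => w; rewrite mul0r add0r.
Qed.

(* moving the multipliers to (lamstar + t dl, gamstar + t dg) moves u0 and b0
   by t du and t db *)
Definition du (dg : 'I_K -> R) s := p s / (2 * ab) * (- \sum_j dg j) + dg s / (2 * alpha s).
Definition db (dl dg : 'I_K -> R) s := du dg s + dl s.
Definition lip dl dg s := `|du dg s| + `|db dl dg s|.

Lemma uG_shift dg t s x :
  uG (fun i => gamstar i + t * dg i) s x = uG gamstar s x + t * du dg s.
Proof. by rewrite /uG /du big_split /= -mulr_sumr; ring. Qed.

Lemma bG_shift dl dg t s :
  bG (fun i => lamstar i + t * dl i) (fun i => gamstar i + t * dg i) s = b0 s + t * db dl dg s.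
Proof. by rewrite /bG /db /du big_split /= -mulr_sumr; ring. Qed.

(* the slope of the dual objective along (dl, dg), where it is differentiable *)
Definition dual_slope dl dg := \sum_s dl s * alpha s - \sum_s (p s)^-1 *
  ((db dl dg s + du dg s) * N1 s + (db dl dg s - du dg s) * N0 s).

Definition near_kink dl dg s t := [set w |
  (`|u0 s w| <= t * lip dl dg s) || (`| `|u0 s w| - b0 s| <= t * lip dl dg s)].

Lemma measurable_near_kink dl dg s t : measurable (near_kink dl dg s t).
Proof.
pose u r := - (p s / ab) * r + uG gamstar s 0.
rewrite (_ : near_kink dl dg s t = [set w | [set r | (`|u r| <= t * lip dl dg s) ||
    (`| `|u r| - b0 s| <= t * lip dl dg s)] (eta (X w) s)]).
  apply: measurable_eta_event; apply: measurable_boolset.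
  apply: measurable_or; apply: measurable_fun_ler => //; first exact: measurable_norm_affine.
  apply: measurableT_comp (@normr_measurable R setT) _.
  by apply: measurable_funB => //; exact: measurable_norm_affine.
by apply/funext => w /=; rewrite /u -uG_affine.
Qed.

Lemma hinge_increment dl dg t s w : 0 <= t ->
  \1_(group s) w * hinge (uG (fun i => gamstar i + t * dg i) s (eta (X w) s))
    (bG (fun i => lamstar i + t * dl i) (fun i => gamstar i + t * dg i) s)
  - \1_(group s) w * hinge (u0 s w) (b0 s)
  <= - t * (\1_(group s) w * cost (gs (X w) s) (du dg s) (db dl dg s))
     + 2 * t * lip dl dg s * \1_(group s `&` near_kink dl dg s t) w.
Proof.
move=> t0; rewrite uG_shift bG_shift indicI /=.
have [hG|hG] := pselect (group s w); last by rewrite indic_out // !mul0r subrr !mulr0 addr0.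
rewrite indic_in // !mul1r gstar_opt_decision.
apply: le_trans (hinge_directional _ _ _ _ t0) _; rewrite lerD2l /lip.
case: ifPn => h; first by rewrite indic_in // mulr1.
by rewrite indic_out ?mulr0 //; exact/negP.
Qed.

Lemma dual_increment_group dl dg t s : 0 <= t ->
  Ex P (fun w => \1_(group s) w * hinge (uG (fun i => gamstar i + t * dg i) s (eta (X w) s))
    (bG (fun i => lamstar i + t * dl i) (fun i => gamstar i + t * dg i) s))
  - Ex P (fun w => \1_(group s) w * hinge (u0 s w) (b0 s))
  <= - t * ((db dl dg s + du dg s) * N1 s + (db dl dg s - du dg s) * N0 s)
     + 2 * t * lip dl dg s * prob P (group s `&` near_kink dl dg s t).
Proof.
move=> t0; have mN : measurable (group s `&` near_kink dl dg s t).
  exact: measurableI (mS s) (measurable_near_kink _ _ _ _).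
have bH lam gam : bounded_mfun (fun w => \1_(group s) w *
    hinge (uG gam s (eta (X w) s)) (bG lam gam s)).
  exact: bounded_mfunM (bounded_mfun_indic (mS s)) (bounded_dual_integrand lam gam s).
have bC : bounded_mfun (fun w => \1_(group s) w * cost (gs (X w) s) (du dg s) (db dl dg s)).
  rewrite (_ : (fun w => _) = fun w => \1_(group s) w *
      cost (gs (X w) s) (0 * eta (X w) s + du dg s) (db dl dg s)).
    by apply: bounded_group_cost; exact: gstar_measurable.
  by apply/funext => w; rewrite mul0r add0r.
rewrite -Ex_gstar_cost -ExB // -(Ex_indic P mN) -ExDZ //; last exact: bounded_mfun_indic.
apply: ler_Ex => [||w]; last exact: hinge_increment.
  exact: bounded_mfunB.
apply: bounded_mfunD; apply: bounded_mfunM => //; try exact: bounded_mfun_cst.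
exact: bounded_mfun_indic.
Qed.

Lemma dual_slope_bound dl dg t : 0 < t ->
  0 <= dual_slope dl dg +
       2 * \sum_s (p s)^-1 * lip dl dg s * prob P (group s `&` near_kink dl dg s t).
Proof.
move=> tp; have t0 := ltW tp.
have := hmin (fun i => lamstar i + t * dl i) (fun i => gamstar i + t * dg i).
have hl : \sum_s (lamstar s + t * dl s) * alpha s =
    \sum_s lamstar s * alpha s + t * \sum_s dl s * alpha s.
  by rewrite mulr_sumr -big_split /=; apply: eq_bigr => s _; ring.
rewrite !dual_objectiveE lee_fin hl => hle.
set H0 := (Z in _ + Z <= _) in hle; set Ht := (Z in _ <= _ + Z) in hle.
have incr : Ht - H0 <= - t * \sum_s (p s)^-1 *
      ((db dl dg s + du dg s) * N1 s + (db dl dg s - du dg s) * N0 s) +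
    t * (2 * \sum_s (p s)^-1 * lip dl dg s * prob P (group s `&` near_kink dl dg s t)).
  rewrite /Ht /H0 -sumrB !mulr_sumr -big_split /=; apply: ler_sum => s _.
  rewrite -mulrBr; apply: le_trans (ler_wpM2l _ (dual_increment_group dl dg s t0)) _.
    by rewrite invr_ge0 ltW.
  by lra.
have : 0 <= t * (dual_slope dl dg +
    2 * \sum_s (p s)^-1 * lip dl dg s * prob P (group s `&` near_kink dl dg s t)).
  by rewrite /dual_slope mulrDr mulrBr; lra.
by rewrite pmulr_rge0.
Qed.

(* The kinks of the hinge are where eta hits one of three values; by
   Assumption 1 they form a null event. *)
Definition kink s := [set w | (u0 s w == 0) || (`|u0 s w| == b0 s)].

Lemma measurable_kink s : measurable (group s `&` kink s).
Proof.
apply: measurableI (mS s) _.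
pose u r := - (p s / ab) * r + uG gamstar s 0.
rewrite (_ : kink s = [set w | [set r | (u r == 0) || (`|u r| == b0 s)] (eta (X w) s)]).
  apply: measurable_eta_event; apply: measurable_boolset.
  by apply: measurable_or; apply: measurable_fun_eqr => //;
    [exact: measurable_affine | exact: measurable_norm_affine].
by apply/funext => w /=; rewrite /u -uG_affine.
Qed.

Lemma kink_null s : P (group s `&` kink s) = 0%E.
Proof.
set c := p s / ab; have c0 : 0 < c by exact: divr_gt0 (ps_gt0 s) alphabar_gt0.
set thr := 1 / 2 + c_gam P S alpha gamstar s.
pose atom r := [set w | S w = s /\ eta (X w) (S w) = r].
have matom r : measurable (atom r).
  rewrite (_ : atom r = group s `&` [set w | [set r] (eta (X w) s)]).
    exact: measurableI (mS s) (measurable_eta_event s (measurable_set1 r)).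
  by apply/seteqP; split => w [/= hs h]; split => //; rewrite ?hs // -hs.
have sub : group s `&` kink s `<=` atom thr `|` atom (thr - b0 s / c) `|` atom (thr + b0 s / c).
  move=> w [/= hs hk]; have hu : u0 s w = c * (thr - eta (X w) s) by rewrite uG_threshold.
  case/orP: hk => /eqP; rewrite hu.
    move/eqP; rewrite mulf_eq0 (negbTE (lt0r_neq0 c0)) /= subr_eq0 => /eqP h.
    by left; left; split; rewrite // hs.
  rewrite normrM (ger0_norm (ltW c0)); have [hp|hn] := lerP 0 (thr - eta (X w) s).
    rewrite (ger0_norm hp) => h; left; right; split; rewrite // hs -h.
    by field; exact: lt0r_neq0 c0.
  rewrite (ltr0_norm hn) => h; right; split; rewrite // hs -h.
  by field; exact: lt0r_neq0 c0.
apply: (subset_measure0 (measurable_kink s) _ sub).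
  by apply: measurableU; [apply: measurableU|]; exact: matom.
apply: null_set_setU; [exact: measurableU|exact: matom| |exact: assump1].
by apply: null_set_setU; try exact: matom; exact: assump1.
Qed.

Lemma near_kink_small dl dg s eps : 0 < eps -> exists N, forall n, (N <= n)%N ->
  prob P (group s `&` near_kink dl dg s (n.+1%:R^-1)) <= eps.
Proof.
have L0 : 0 <= lip dl dg s by exact: addr_ge0.
have mF n : measurable (group s `&` near_kink dl dg s (n.+1%:R^-1)).
  exact: measurableI (mS s) (measurable_near_kink _ _ _ _).
apply: prob_eventually_small => // [n m nm w [hs hb]|].
  split => //; move: hb; rewrite /near_kink /=.
  have ht : (m.+1%:R : R)^-1 * lip dl dg s <= (n.+1%:R)^-1 * lip dl dg s.
    by apply: ler_wpM2r => //; rewrite lef_pV2 ?posrE ?ltr0Sn // ler_nat ltnS.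
  by case/orP => h; apply/orP; [left|right]; exact: le_trans h ht.
apply: (subset_measure0 (bigcapT_measurable mF) (measurable_kink s) _ (kink_null s)).
move=> w hw; have [hs _] := hw 0%N I; split => //.
apply/negPn/negP; rewrite negb_or => /andP[h1 h2].
have m0 : 0 < Num.min `|u0 s w| `| `|u0 s w| - b0 s|.
  by rewrite lt_min !normr_gt0 h1 subr_eq0 h2.
have [n hn] := small_multiple_of_inverse L0 m0.
have [_] := hw n I; rewrite /near_kink /=.
by case/orP => h; have := le_lt_trans h hn; rewrite lt_min ltxx // andbF.
Qed.

(* first-order optimality of (lamstar, gamstar): letting t -> 0 in
   dual_slope_bound *)
Lemma dual_slope_ge0 dl dg : 0 <= dual_slope dl dg.
Proof.
set C := \sum_s (p s)^-1 * lip dl dg s.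
have C0 : 0 <= C.
  by apply: sumr_ge0 => s _; apply: mulr_ge0; [rewrite invr_ge0 ltW|exact: addr_ge0].
apply/ler_addgt0Pr => e e0.
set eps := e / (2 * C + 1).
have eps0 : 0 < eps by apply: divr_gt0 => //; lra.
have he : eps * (2 * C + 1) = e by rewrite /eps divfK //; apply: lt0r_neq0; lra.
have [N hN] := fin_all_exists (fun s => near_kink_small dl dg s eps0).
set M := \max_s N s.
have tM : 0 < (M.+1%:R : R)^-1 by rewrite invr_gt0 ltr0Sn.
have := dual_slope_bound dl dg tM.
set B := \sum_s _.
have hB : B <= C * eps.
  rewrite /B /C mulr_suml; apply: ler_sum => s _; apply: ler_wpM2l.
    by apply: mulr_ge0; [rewrite invr_ge0 ltW|exact: addr_ge0].
  by apply: hN; exact: leq_bigmax.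
lra.
Qed.

Lemma du0 s : du (fun _ => 0) s = 0.
Proof. by rewrite /du big1 // oppr0 mulr0 mul0r addr0. Qed.

Lemma dual_slope_lambda (sg : R) s0 :
  dual_slope (fun i => if i == s0 then sg else 0) (fun _ => 0) =
  sg * (alpha s0 - (p s0)^-1 * (N1 s0 + N0 s0)).
Proof.
rewrite /dual_slope /db (bigD1 s0) //= eqxx big1 ?addr0; last by move=> i /negPf ->; rewrite mul0r.
rewrite (bigD1 s0) //= eqxx big1 ?addr0 ?du0; first ring.
by move=> i /negPf ->; rewrite du0; ring.
Qed.

Lemma dual_slope_gamma (sg : R) j :
  dual_slope (fun _ => 0) (fun i => if i == j then sg else 0) =
  sg * ((\sum_s N1 s) / ab - N1 j / (alpha j * p j)).
Proof.
have hsum : \sum_i (if i == j then sg else 0) = sg.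
  by rewrite (bigD1 j) //= eqxx big1 ?addr0 // => i /negPf ->.
rewrite /dual_slope /db big1 ?add0r; last by move=> i _; rewrite mul0r.
rewrite /du hsum (eq_bigr (fun s =>
    (if s == j then sg * N1 s / (alpha s * p s) else 0) - sg * N1 s / ab)); last first.
  move=> s _; case: eqP => [->|_]; field;
  by rewrite (lt0r_neq0 alphabar_gt0) (lt0r_neq0 (alpha_gt0 _)) (lt0r_neq0 (ps_gt0 _)).
rewrite sumrB (bigD1 j) //= eqxx big1 ?addr0; last by move=> i /negPf ->.
by rewrite -mulr_suml -mulr_sumr; ring.
Qed.

Lemma gstar_acceptance s : N1 s + N0 s = alpha s * p s.
Proof.
have := dual_slope_ge0 (fun i => if i == s then 1 else 0) (fun _ => 0).
have := dual_slope_ge0 (fun i => if i == s then -1 else 0) (fun _ => 0).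
rewrite !dual_slope_lambda mul1r mulN1r => h1 h2.
have e : (p s)^-1 * (N1 s + N0 s) = alpha s by lra.
by rewrite -e mulrAC mulVf ?mul1r //; exact: lt0r_neq0 (ps_gt0 s).
Qed.

Lemma gstar_parity j : N1 j / (alpha j * p j) = (\sum_s N1 s) / ab.
Proof.
have := dual_slope_ge0 (fun _ => 0) (fun i => if i == j then 1 else 0).
have := dual_slope_ge0 (fun _ => 0) (fun i => if i == j then -1 else 0).
by rewrite !dual_slope_gamma mul1r mulN1r; lra.
Qed.

Theorem gstar_feasible : DPWA_feasible P X S alpha gs.
Proof.
split; first exact: gstar_measurable.
move=> s; split.
  rewrite /NA prob_group_accept ?gstar_acceptance ?mulfK //; last exact: gstar_measurable.
  exact: lt0r_neq0 (ps_gt0 s).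
rewrite /PTs /PT prob_group_positive prob_group_accept ?prob_positive ?prob_accept;
  try exact: gstar_measurable.
rewrite gstar_acceptance [Z in _ = _ / Z](eq_bigr (fun i => alpha i * p i)) => [|i _];
  last exact: gstar_acceptance.
rewrite gstar_parity; congr (_ / _).
by rewrite /alphabar; apply: eq_bigr => i _; rewrite mulrC.
Qed.

End DPWA.

Theorem theorem1 (R : realType) (d K : nat)
  (d0 : measure_display) (Omega : measurableType d0) (P : probability Omega R)
  (X : Omega -> 'rV[R]_d) (S : Omega -> 'I_K) (Y : Omega -> bool)
  (eta : 'rV[R]_d -> 'I_K -> R) (alpha : 'I_K -> R)
  (lamstar gamstar : 'I_K -> R)
  (mX : forall A, borelRd A -> measurable (X @^-1` A))
  (mS : forall s : 'I_K, measurable (S @^-1` [set s]))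
  (mY : measurable (Y @^-1` [set true]))
  (ps_gt0 : forall s : 'I_K, 0 < p_of P S s)
  (alpha_range : forall s : 'I_K, 0 < alpha s <= 1)
  (eta01 : forall x s, 0 <= eta x s <= 1)
  (eta_meas : forall (s : 'I_K) (B : set R), measurable B ->
     borelRd [set x | B (eta x s)])
  (eta_cond : forall (s : 'I_K) (A : set 'rV[R]_d), borelRd A ->
     (\int[P]_(w in [set w | A (X w) /\ S w = s]) ((Y w)%:R)%:E =
      \int[P]_(w in [set w | A (X w) /\ S w = s]) (eta (X w) (S w))%:E)%E)
  (assump1 : forall (s : 'I_K) (t : R),
     P [set w | S w = s /\ eta (X w) (S w) = t] = 0%E)
  (hmin : forall lam gam : 'I_K -> R,
     (dual_objective P X S eta alpha lamstar gamstar
      <= dual_objective P X S eta alpha lam gam)%E) :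
  DPWA_feasible P X S alpha (gstar P S eta alpha lamstar gamstar) /\
  forall g : classifier R d K, DPWA_feasible P X S alpha g ->
    risk P X S Y (gstar P S eta alpha lamstar gamstar) <= risk P X S Y g.
Proof.
have alpha_gt0 s : 0 < alpha s by case/andP: (alpha_range s).
have feasible := gstar_feasible mX mS ps_gt0 alpha_gt0 eta01 eta_meas hmin assump1.
split=> // g hg.
exact: (gstar_optimal mX mS mY ps_gt0 alpha_gt0 eta01 eta_meas eta_cond hg feasible).
Qed.
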